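(* In the binary model, if $\lambda\le\frac12$, then the Lebesgue measure of $S$ is $0$ almost surely.
   Context: Binary model. Let $T=\{1,2\}^*$ be the set of finite words over $\{1,2\}$ (the rooted binary tree; $v|j$ is the prefix of $v$ of length $j$). Let $\{a_v\}_{v\in T,\,|v|\ge1}$ be i.i.d. random variables with $\mathbb{P}(a_v=0)=\mathbb{P}(a_v=1)=\frac12$. Fix $\lambda\in(0,1)$. For $\omega\in\{1,2\}^{\mathbb{N}}$ put $f(\omega)=\sum_{j\ge1}a_{\omega|j}\lambda^j$. Let $\mu$ be the image under $f$ of the uniform product measure on $\{1,2\}^{\mathbb{N}}$, and $S=f(\{1,2\}^{\mathbb{N}})$ its (random, compact) support. *)

From HB Require Import structures.
From mathcomp Require Import all_boot all_order all_algebra.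
From mathcomp Require Import all_classical all_reals all_analysis.
Set Implicit Arguments. Unset Strict Implicit. Unset Printing Implicit Defensive.
Import Order.TTheory GRing.Theory Num.Theory.
Import numFieldNormedType.Exports.
Local Open Scope classical_set_scope.
Local Open Scope ring_scope.

(* Vertices of the rooted binary tree T = {1,2}^* are encoded as finite
   words over bool (false <-> 1, true <-> 2); infinite words
   omega in {1,2}^N are encoded as functions nat -> bool. *)
Definition word := seq bool.

Definition prefix (omega : nat -> bool) (j : nat) : word :=
  [seq omega i | i <- iota 0 j].

Definition mutually_independent_rv {d} {T : measurableType d} {R : realType}
  (P : probability T R) (I : eqType) (X : I -> {RV P >-> R}) : Prop :=
  forall (s : seq I) (B : I -> set R),
    uniq s -> (forall i, measurable (B i)) ->
    P (\bigcap_(i in [set` s]) (X i @^-1` B i)) =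
    (\prod_(i <- s) P (X i @^-1` B i))%E.

Arguments mutually_independent_rv {d T R} P {I} X.

Definition binary_f {T : Type} {R : realType} (a : word -> T -> R)
  (lambda : R) (x : T) (omega : nat -> bool) : R :=
  limn (fun n => \sum_(0 <= j < n) (a (prefix omega j.+1) x * lambda ^+ j.+1)).

(* S = f({1,2}^N), the (random) support of mu *)
Definition binary_S {T : Type} {R : realType} (a : word -> T -> R)
  (lambda : R) (x : T) : set R :=
  range (binary_f a lambda x).

From Pilot Require Import Defs.
From HB Require Import structures.
From mathcomp Require Import all_boot all_order all_algebra.
From mathcomp Require Import all_classical all_reals all_analysis.
From mathcomp Require Import zify ring lra.
Set Implicit Arguments. Unset Strict Implicit. Unset Printing Implicit Defensive.
Import Order.TTheory GRing.Theory Num.Theory.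
Import numFieldNormedType.Exports.
Local Open Scope classical_set_scope.
Local Open Scope ring_scope.

(* Almost surely every label a_v is 0 or 1.  A point of S whose path carries
   the labels s_1 ... s_n up to depth n lies within lam^(n+1)/(1-lam) <= 2^-n
   to the right of sum_j s_j lam^j, so Leb(S) is at most the fraction of the
   2^n words of length n that label some path of the tree.  The labelling up
   to depth n is uniform, and b::s labels a path iff s labels a path below a
   child of the root labelled b; the two children being independent, the
   probability q_n(s) satisfies q_{n+1}(b::s) = 1 - (1 - q_n(s)/2)^2.  By
   Jensen the mean m_n of q_n over words obeys m_{n+1} <= m_n - m_n^2/4, so
   m_n <= 4/(n+4).  By Markov the fraction at depth n exceeds e with
   probability at most m_n/e -> 0, hence almost surely it drops below every
   e at some depth. *)

Lemma sqr_sum_le (R : realDomainType) (r : seq R) :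
  (\sum_(x <- r) x) ^+ 2 <= (size r)%:R * \sum_(x <- r) x ^+ 2.
Proof.
elim: r => [|x r IH]; first by rewrite !big_nil expr2 mulr0.
rewrite !big_cons /= -natr1.
set S := \sum_(y <- r) y in IH *; set Q := \sum_(y <- r) y ^+ 2 in IH *.
set m := (size r)%:R in IH *.
have Q0 : 0 <= Q by rewrite sumr_ge0 // => y _; exact: sqr_ge0.
suff cross : 2 * S * x <= Q + m * x ^+ 2 by nra.
have [m0|m_gt0] := eqVneq m 0.
  have S0 : S = 0 by apply/eqP; rewrite -sqrf_eq0 eq_le sqr_ge0 andbT -(mul0r Q) -m0.
  by rewrite S0 m0; nra.
have m_pos : 0 < m by rewrite lt_def m_gt0 /=.
have sq := sqr_ge0 (S - m * x).
by rewrite -(ler_pM2l m_pos); nra.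
Qed.

Lemma measure_bigsetU_le d (T : ringOfSetsType d) (R : realType)
    (mu : {measure set T -> \bar R}) (I : Type) (r : seq I) (P : pred I)
    (F : I -> set T) :
  (forall i, P i -> measurable (F i)) ->
  (mu (\big[setU/set0]_(i <- r | P i) F i) <= \sum_(i <- r | P i) mu (F i))%E.
Proof.
move=> mF; elim: r => [|i r IH]; first by rewrite !big_nil measure0.
rewrite !big_cons; case: ifP => Pi //.
apply: le_trans (measureU2 _ _ _) _; [exact: mF|exact: bigsetU_measurable|].
exact: leeD.
Qed.

Lemma mem_bigsetU (T : Type) (I : eqType) (r : seq I) (P : pred I)
    (F : I -> set T) (i : I) (x : T) :
  i \in r -> P i -> F i x -> (\big[setU/set0]_(j <- r | P j) F j) x.
Proof.
elim: r => [//|j r IH]; rewrite inE big_cons => /orP[/eqP <-|ir] Pi Fx.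
  by rewrite Pi; left.
by case: ifP => _; [right|]; apply: IH.
Qed.

(* Unlike [le_measure], no measurability is needed: this is the outer measure. *)
Lemma le_lebesgue_measure (R : realType) (A B : set R) :
  A `<=` B -> ((@lebesgue_measure R) A <= lebesgue_measure B)%E.
Proof.
move=> AB; rewrite /lebesgue_measure /lebesgue_stieltjes_measure /measure_extension.
exact: le_outer_measure.
Qed.

Lemma le_invS_eq0 (R : realType) (u : \bar R) :
  (0 <= u)%E -> (forall m : nat, u <= (m.+1%:R^-1)%:E)%E -> u = 0%E.
Proof.
move=> u_ge0 u_le; apply/eqP; rewrite eq_le u_ge0 andbT.
apply/lee_addgt0Pr => e e_gt0; rewrite add0e.
have /archi_boundP : 0 <= e^-1 by rewrite invr_ge0 ltW.
set m := Num.Def.archi_bound _ => m_gt.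
apply: (le_trans (u_le m)); rewrite lee_fin -[leRHS]invrK lef_pV2 ?posrE ?invr_gt0 //.
by rewrite ltW // (lt_le_trans m_gt) // ler_nat.
Qed.

(* A labelling of the binary tree of depth [n]: for each child of the root,
   its label and a labelling of the subtree below it. *)
Fixpoint labelling (n : nat) : finType :=
  if n is n'.+1 then ((bool * labelling n') * (bool * labelling n'))%type
  else unit.

Fixpoint path_labelled (n : nat) : labelling n -> seq bool -> bool :=
  match n return labelling n -> seq bool -> bool with
  | 0 => fun _ s => nilp s
  | n'.+1 => fun c s =>
      if s is b :: s' then
        ((b == c.1.1) && path_labelled c.1.2 s') ||
        ((b == c.2.1) && path_labelled c.2.2 s')
      else false
  end.

Fixpoint label (n : nat) : labelling n -> word -> bool :=
  match n return labelling n -> word -> bool with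
  | 0 => fun _ _ => false
  | n'.+1 => fun c v =>
      match v with
      | [::] => false
      | [:: b] => if b then c.2.1 else c.1.1
      | b :: w => if b then label c.2.2 w else label c.1.2 w
      end
  end.

Fixpoint labelling_of (n : nat) (l : word -> bool) : labelling n :=
  match n return labelling n with
  | 0 => tt
  | n'.+1 => ((l [:: false], labelling_of n' (fun w => l (false :: w))),
              (l [:: true], labelling_of n' (fun w => l (true :: w))))
  end.

Fixpoint words (n : nat) : seq word :=
  if n is n'.+1 then [seq false :: s | s <- words n'] ++ [seq true :: s | s <- words n']
  else [:: [::]].

Fixpoint vertices (n : nat) : seq word :=
  if n is n'.+1 then
    [:: [:: false]; [:: true]] ++ [seq false :: w | w <- vertices n']
      ++ [seq true :: w | w <- vertices n']
  else [::].

Definition path_labels (n : nat) (l : word -> bool) (om : nat -> bool) : seq bool :=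
  [seq l (Defs.prefix om j.+1) | j <- iota 0 n].

Lemma mem_map_cons (b b' : bool) (w : word) (s : seq word) :
  (b :: w \in [seq b' :: x | x <- s]) = (b == b') && (w \in s).
Proof. by apply/mapP/andP => [[x Hx [-> ->]]|[/eqP-> Hw]]; [split|exists w]. Qed.

Lemma nil_notin_map_cons (b : bool) (s : seq word) :
  ([::] \in [seq b :: x | x <- s]) = false.
Proof. by apply/negbTE/mapP => -[]. Qed.

Lemma size_words n : size (words n) = (2 ^ n)%N.
Proof. by elim: n => [|n IH] //=; rewrite size_cat !size_map IH expnS mul2n addnn. Qed.

Lemma mem_words n s : (s \in words n) = (size s == n).
Proof.
elim: n s => [|n IH] [|b s] //=; rewrite mem_cat ?nil_notin_map_cons //.
by rewrite !mem_map_cons IH eqSS; case: b; rewrite /= ?orbF.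
Qed.

Lemma mem_vertices n v : (v \in vertices n) = (0 < size v <= n)%N.
Proof.
elim: n v => [|n IH] [|b w] //=; rewrite !inE !mem_cat ?nil_notin_map_cons //.
rewrite !mem_map_cons !IH /=.
by case: b; case: w => [|x w] /=; rewrite ?orbF ?ltnS.
Qed.

Lemma uniq_vertices n : uniq (vertices n).
Proof.
elim: n => [|n IH] //=.
rewrite !inE !mem_cat !mem_map_cons !mem_vertices /=.
rewrite cat_uniq !map_inj_uniq ?IH; try by move=> x y [].
rewrite andbT /=; apply/hasPn => _ /mapP[w _ ->].
by rewrite mem_map_cons.
Qed.

Lemma label_labelling_of n l v : v \in vertices n -> label (labelling_of n l) v = l v.
Proof.
elim: n l v => [|n IH] l [|b w] //; rewrite mem_vertices //= ltnS.
by case: w => [|b' w] Hw; case: b; rewrite //= IH // mem_vertices.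
Qed.

Lemma card_labelling n : #|labelling n| = (2 ^ size (vertices n))%N.
Proof.
elim: n => [|n IH]; first by rewrite card_unit.
rewrite /= !card_prod card_bool IH /= !size_cat !size_map.
by rewrite -!expnS -expnD addSn addnS.
Qed.

Lemma card_labelling_gt0 n : (0 < #|labelling n|)%N.
Proof. by rewrite card_labelling expn_gt0. Qed.

Lemma prefixS om j : Defs.prefix om j.+1 = om 0%N :: Defs.prefix (fun i => om i.+1) j.
Proof. by rewrite /Defs.prefix /= -(addn0 1%N) iotaDl -map_comp. Qed.

Lemma size_prefix om j : size (Defs.prefix om j) = j.
Proof. by rewrite size_map size_iota. Qed.

Lemma size_path_labels n l om : size (path_labels n l om) = n.
Proof. by rewrite size_map size_iota. Qed.

Lemma path_labelsS n l om : path_labels n.+1 l om =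
  l [:: om 0%N] :: path_labels n (fun w => l (om 0%N :: w)) (fun i => om i.+1).
Proof.
rewrite /path_labels /= -(addn0 1%N) iotaDl -map_comp; congr (_ :: _).
by apply: eq_map => j /=; rewrite add1n prefixS.
Qed.

Lemma path_labelled_of n l om : path_labelled (labelling_of n l) (path_labels n l om).
Proof.
elim: n l om => [|n IH] l om //.
by rewrite path_labelsS /=; case: (om 0%N); rewrite eqxx IH ?orbT.
Qed.
Section path_counting.
Variable R : realType.

Definition trace_prob n (s : seq bool) : R :=
  (\sum_(c : labelling n) (path_labelled c s)%:R) / #|labelling n|%:R.

Definition n_traced n (c : labelling n) : R :=
  \sum_(s <- words n) (path_labelled c s)%:R.

Definition mean_trace_prob n : R :=
  (\sum_(s <- words n) trace_prob n s) / (2 ^ n)%:R.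

Lemma trace_prob_ge0 n s : 0 <= trace_prob n s.
Proof. by rewrite divr_ge0 // sumr_ge0. Qed.

Lemma mean_trace_prob_ge0 n : 0 <= mean_trace_prob n.
Proof. by rewrite divr_ge0 // sumr_ge0 // => s _; exact: trace_prob_ge0. Qed.

Lemma mean_trace_prob0 : mean_trace_prob 0 = 1.
Proof.
rewrite /mean_trace_prob /= big_seq1 /trace_prob (eq_bigr (fun _ => 1)) //.
by rewrite sumr_const card_unit expn0 !divr1.
Qed.

Lemma sum_branch_labelled n b s :
  \sum_(p : bool * labelling n) ((b == p.1) && path_labelled p.2 s)%:R =
  \sum_(c : labelling n) (path_labelled c s)%:R :> R.
Proof.
rewrite -(pair_big xpredT xpredT (fun b' c => ((b == b') && path_labelled c s)%:R)) /=.
rewrite big_bool; case: b => /=.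
- by rewrite [X in _ + X]big1 ?addr0.
- by rewrite [X in X + _]big1 ?add0r.
Qed.

(* [b :: s] is missed by a labelling of depth [n + 1] iff it is missed
   through each child of the root, and the two children are independent. *)
Lemma trace_probS n b s :
  trace_prob n.+1 (b :: s) = trace_prob n s - trace_prob n s ^+ 2 / 4.
Proof.
rewrite /trace_prob.
set N := #|labelling n|%:R; set C := \sum_(c : labelling n) (path_labelled c s)%:R.
have N0 : N != 0 by rewrite pnatr_eq0 -lt0n card_labelling_gt0.
have cardS : #|labelling n.+1|%:R = (2 * N) ^+ 2 :> R.
  by rewrite /= !card_prod card_bool natrM -/N expr2 natrM.
pose miss (p : bool * labelling n) : R := 1 - ((b == p.1) && path_labelled p.2 s)%:R.
have miss_sum : \sum_p miss p = 2 * N - C.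
  rewrite sumrB sumr_const card_prod card_bool natrM -/N mulr_natl.
  by rewrite sum_branch_labelled.
have count : \sum_(c : labelling n.+1) (path_labelled c (b :: s))%:R =
    (2 * N) ^+ 2 - (2 * N - C) ^+ 2 :> R.
  have -> : \sum_(c : labelling n.+1) (path_labelled c (b :: s))%:R =
      \sum_(c : labelling n.+1) (1 - miss c.1 * miss c.2).
    by apply: eq_bigr => -[[b1 c1] [b2 c2]] _ /=; rewrite /miss /=;
      case: (_ && _); case: (_ && _) => /=; ring.
  rewrite sumrB sumr_const -cardS; congr (_ - _).
  rewrite -(pair_big xpredT xpredT (fun p1 p2 => miss p1 * miss p2)) /=.
  under eq_bigr => p _ do rewrite -mulr_sumr.
  by rewrite -mulr_suml miss_sum expr2.
by rewrite count cardS; field.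
Qed.

Lemma mean_trace_probS n : mean_trace_prob n.+1 =
  mean_trace_prob n - (\sum_(s <- words n) trace_prob n s ^+ 2) / (4 * (2 ^ n)%:R).
Proof.
rewrite /mean_trace_prob [words _]/= big_cat !big_map.
rewrite (eq_bigr _ (fun s _ => trace_probS n false s)).
rewrite (eq_bigr _ (fun s _ => trace_probS n true s)).
rewrite sumrB expnS natrM.
set A := \sum_(s <- words n) trace_prob n s.
rewrite -mulr_suml; set B := \sum_(s <- words n) trace_prob n s ^+ 2.
by rewrite /=; field; rewrite pnatr_eq0 expn_eq0.
Qed.

Lemma mean_trace_prob_decr n :
  mean_trace_prob n.+1 <= mean_trace_prob n - mean_trace_prob n ^+ 2 / 4.
Proof.
rewrite mean_trace_probS lerD2l lerN2 /mean_trace_prob.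
have := sqr_sum_le [seq trace_prob n s | s <- words n].
rewrite size_map size_words !big_map.
set A := \sum_(s <- words n) trace_prob n s.
set B := \sum_(s <- words n) trace_prob n s ^+ 2.
have N_gt0 : 0 < (2 ^ n)%:R :> R by rewrite ltr0n expn_gt0.
move=> AB; rewrite -subr_ge0.
have -> : B / (4 * (2 ^ n)%:R) - (A / (2 ^ n)%:R) ^+ 2 / 4 =
    ((2 ^ n)%:R * B - A ^+ 2) / (4 * (2 ^ n)%:R ^+ 2).
  by field; rewrite gt_eqF.
by rewrite divr_ge0 ?subr_ge0 // mulr_ge0 // exprn_ge0 // ltW.
Qed.

(* [u |-> u - u^2/4] is increasing on [0, 1], so the bound propagates. *)
Lemma mean_trace_prob_le n : mean_trace_prob n <= 4 / (n%:R + 4).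
Proof.
elim: n => [|n IH]; first by rewrite mean_trace_prob0 add0r divff.
apply: (le_trans (mean_trace_prob_decr n)).
have m_ge0 := mean_trace_prob_ge0 n.
have k_gt0 : 0 < n%:R + 4 :> R by rewrite ltr_wpDl.
set u := 4 / (n%:R + 4) in IH.
have u_le1 : u <= 1 by rewrite /u ler_pdivrMr // mul1r lerDr.
apply: (@le_trans _ _ (u - u ^+ 2 / 4)); first by nra.
have -> : n.+1%:R + 4 = (n%:R + 4) + 1 :> R by rewrite -natr1; ring.
rewrite /u -subr_ge0.
set k := n%:R + 4 in k_gt0 *.
have -> : 4 / (k + 1) - (4 / k - (4 / k) ^+ 2 / 4) = 4 / (k ^+ 2 * (k + 1)).
  by field; rewrite !gt_eqF // addr_gt0.
by rewrite divr_ge0 // mulr_ge0 ?exprn_ge0 ?ltW // addr_gt0.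
Qed.

Lemma mean_trace_prob_small (e : R) : 0 < e -> exists n, mean_trace_prob n <= e.
Proof.
move=> e_gt0.
have /archi_boundP : 0 <= 4 / e by rewrite divr_ge0 // ltW.
set n := Num.Def.archi_bound _ => n_gt.
exists n; apply: (le_trans (mean_trace_prob_le n)).
rewrite ler_pdivrMr ?ltr_wpDr //; move: n_gt; rewrite ltr_pdivrMr // => n_gt.
by nra.
Qed.

Lemma mean_trace_prob_n_traced n :
  mean_trace_prob n = \sum_(c : labelling n) n_traced c / ((2 ^ n)%:R * #|labelling n|%:R).
Proof.
rewrite /mean_trace_prob /n_traced /trace_prob -!mulr_suml exchange_big /=.
by rewrite -mulrA -invfM [X in _ * X^-1]mulrC.
Qed.

Lemma n_traced_markov n (e : R) : 0 < e ->
  \sum_(c : labelling n | e <= n_traced c / (2 ^ n)%:R) #|labelling n|%:R^-1 <=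
  mean_trace_prob n / e.
Proof.
move=> e_gt0.
have n_traced_ge0 (c : labelling n) : 0 <= n_traced c by rewrite sumr_ge0.
rewrite mean_trace_prob_n_traced mulr_suml.
rewrite [leRHS](bigID (fun c => e <= n_traced c / (2 ^ n)%:R)) /=.
rewrite -[leLHS]addr0; apply: lerD; last first.
  by apply: sumr_ge0 => c _; rewrite !divr_ge0 // ltW.
apply: ler_sum => c big_c.
rewrite invfM mulrA -[leLHS]mul1r mulrAC ler_wpM2r ?invr_ge0 //.
by rewrite ler_pdivlMr // mul1r.
Qed.

End path_counting.

Section label_geometry.
Variables (R : realType) (lam : R).
Hypotheses (lam_gt0 : 0 < lam) (lam_le_half : lam <= 1 / 2).
Variable l : word -> bool.

Definition label_sum (om : nat -> bool) (k : nat) : R :=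
  \sum_(0 <= j < k) (l (Defs.prefix om j.+1))%:R * lam ^+ j.+1.

Definition word_point n (s : seq bool) : R :=
  \sum_(0 <= j < n) (nth false s j)%:R * lam ^+ j.+1.

Definition label_set : set R := range (fun om => limn (label_sum om)).

Definition tail_weight n : R := lam ^+ n.+1 / (1 - lam).

Lemma lam_lt1 : lam < 1.
Proof. by apply: le_lt_trans lam_le_half _; rewrite ltr_pdivrMr // mul1r ltr1n. Qed.

Lemma label_sumS om k :
  label_sum om k.+1 = label_sum om k + (l (Defs.prefix om k.+1))%:R * lam ^+ k.+1.
Proof. by rewrite /label_sum big_nat_recr. Qed.

Lemma label_sum_le_geom om n k : (n <= k)%N ->
  label_sum om k <= label_sum om n + (lam ^+ n.+1 - lam ^+ k.+1) / (1 - lam).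
Proof.
have lam1 : 0 < 1 - lam by rewrite subr_gt0 lam_lt1.
elim: k => [|k IH]; first by rewrite leqn0 => /eqP ->; rewrite subrr mul0r addr0.
rewrite leq_eqVlt => /orP[/eqP ->|]; first by rewrite subrr mul0r addr0.
rewrite ltnS => /IH le_k; rewrite label_sumS.
have le_term : (l (Defs.prefix om k.+1))%:R * lam ^+ k.+1 <= lam ^+ k.+1.
  by case: (l _); rewrite ?mul1r ?mul0r // exprn_ge0 // ltW.
apply: (le_trans (lerD le_k le_term)).
rewrite -addrA lerD2l le_eqVlt; apply/orP; left; apply/eqP.
by rewrite [lam ^+ k.+2]exprS; field; rewrite gt_eqF.
Qed.

Lemma label_sum_nd om : nondecreasing_seq (label_sum om).
Proof.
apply/nondecreasing_seqP => k; rewrite label_sumS lerDl.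
by rewrite mulr_ge0 // exprn_ge0 // ltW.
Qed.

Lemma tail_weight_ge0 n : 0 <= tail_weight n.
Proof. by rewrite /tail_weight divr_ge0 ?exprn_ge0 ?ltW // subr_gt0 lam_lt1. Qed.

Lemma label_sum_le_tail om n k :
  (n <= k)%N -> label_sum om k <= label_sum om n + tail_weight n.
Proof.
move=> nk; apply: (le_trans (@label_sum_le_geom om n k nk)).
rewrite /tail_weight lerD2l ler_pM2r ?invr_gt0 ?subr_gt0 ?lam_lt1 //.
by rewrite gerDl oppr_le0 exprn_ge0 // ltW.
Qed.

Lemma label_sum_cvg om : cvgn (label_sum om).
Proof.
apply: nondecreasing_is_cvgn; first exact: label_sum_nd.
exists (label_sum om 0 + tail_weight 0) => _ [k _ <-].
exact: label_sum_le_tail.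
Qed.

Lemma label_sum_le_lim om n : label_sum om n <= limn (label_sum om).
Proof. by apply: nondecreasing_cvgn_le; [exact: label_sum_nd|exact: label_sum_cvg]. Qed.

Lemma lim_le_label_sum om n :
  limn (label_sum om) <= label_sum om n + tail_weight n.
Proof.
apply: limr_le; first exact: label_sum_cvg.
by near=> k; apply: label_sum_le_tail; near: k; exists n.
Unshelve. all: by end_near.
Qed.

Lemma label_sum_word_point om n : label_sum om n = word_point n (path_labels n l om).
Proof.
apply: eq_big_nat => j /andP[_ jn].
by rewrite /path_labels (nth_map 0%N) ?size_iota // nth_iota.
Qed.

Lemma tail_weight_le n : tail_weight n <= (2 ^ n)%:R^-1.
Proof.
have lam1 : 0 < 1 - lam by rewrite subr_gt0 lam_lt1.
have half : lam / (1 - lam) <= 1.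
  by rewrite ler_pdivrMr // mul1r; move: lam_le_half; rewrite div1r; lra.
rewrite /tail_weight exprSr -mulrA -[leRHS]mulr1 natrX -exprVn ler_pM //.
- by rewrite exprn_ge0 // ltW.
- by rewrite divr_ge0 // ltW.
- by rewrite lerXn2r ?nnegrE ?invr_ge0 ?(ltW lam_gt0) // -div1r.
Qed.

Lemma label_set_sub n : label_set `<=`
  \big[setU/set0]_(s <- words n | path_labelled (labelling_of n l) s)
     `[word_point n s, word_point n s + tail_weight n]%classic.
Proof.
move=> _ [om _ <-]; apply: (mem_bigsetU (i := path_labels n l om)).
- by rewrite mem_words size_path_labels.
- exact: path_labelled_of.
- by rewrite /= in_itv /= -label_sum_word_point label_sum_le_lim lim_le_label_sum.
Qed.

Lemma lebesgue_label_set_le n :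
  ((@lebesgue_measure R) label_set <=
   (n_traced R (labelling_of n l) / (2 ^ n)%:R)%:E)%E.
Proof.
apply: (le_trans (le_lebesgue_measure (label_set_sub n))).
apply: (le_trans (measure_bigsetU_le lebesgue_measure _ (fun s _ => measurable_itv _))).
set w := tail_weight n.
apply: (@le_trans _ _ (\sum_(s <- words n | path_labelled (labelling_of n l) s) w%:E)).
  apply: lee_sum => s _; have := lebesgue_measure_itv `[word_point n s, word_point n s + w].
  rewrite /= lte_fin => ->; case: ifP => _; last by rewrite lee_fin tail_weight_ge0.
  by rewrite -EFinD lee_fin addrAC subrr add0r.
rewrite sumEFin lee_fin big_mkcond /n_traced mulr_suml.
apply: ler_sum => s _; case: (path_labelled _ s); last by rewrite mul0r.
by rewrite mul1r tail_weight_le.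
Qed.

End label_geometry.

Definition zero_one_labels (R : realType) (f : word -> R) : Prop :=
  forall v, (0 < size v)%N -> f v = 0 \/ f v = 1.

Section label_events.
Variables (d : measure_display) (T : measurableType d) (R : realType)
  (P : probability T R) (a : word -> {RV P >-> R}).
Hypothesis a_indep : mutually_independent_rv P a.
Hypothesis a_fair : forall v : word, (0 < size v)%N ->
  P (a v @^-1` [set 0]) = (1 / 2)%:E /\ P (a v @^-1` [set 1]) = (1 / 2)%:E.

Definition label_event n (c : labelling n) : set T :=
  \bigcap_(v in [set` vertices n]) (a v @^-1` [set (label c v)%:R]).

Lemma measurable_label_event n (c : labelling n) : measurable (label_event c).
Proof.
apply: fin_bigcap_measurable; first exact: finite_seq.
by move=> v _; apply: measurable_funPTI.
Qed.

Lemma P_label_event n (c : labelling n) : P (label_event c) = (#|labelling n|%:R^-1)%:E.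
Proof.
rewrite /label_event (a_indep (B := fun v => [set (label c v)%:R]) (uniq_vertices n)) //.
rewrite (eq_big_seq (fun _ => (1 / 2)%:E)); last first.
  move=> v; rewrite mem_vertices => /andP[v_gt0 _].
  by have [P0 P1] := a_fair v_gt0; case: (label c v).
by rewrite prodEFin big_const_seq count_predT iter_mulr_1 card_labelling natrX div1r exprVn.
Qed.

Definition wide_event m n : set T :=
  \big[setU/set0]_(c : labelling n | m.+1%:R^-1 <= n_traced R c / (2 ^ n)%:R)
    label_event c.

Lemma measurable_wide_event m n : measurable (wide_event m n).
Proof. by apply: bigsetU_measurable => c _; exact: measurable_label_event. Qed.

Lemma P_wide_event_le m n : (P (wide_event m n) <= (m.+1%:R * mean_trace_prob R n)%:E)%E.
Proof.
apply: (le_trans (measure_bigsetU_le P _ (fun c _ => measurable_label_event c))).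
rewrite (eq_bigr (fun=> (#|labelling n|%:R^-1)%:E)) => [|c _]; last exact: P_label_event.
rewrite sumEFin lee_fin; apply: le_trans (n_traced_markov _ _) _.
  by rewrite invr_gt0.
by rewrite invrK mulrC.
Qed.

Lemma ae_not_always_wide m : \forall x \ae P, ~ (forall n, wide_event m n x).
Proof.
have always_meas : measurable (\bigcap_n wide_event m n).
  by apply: bigcap_measurable => [|n _]; [exists 0%N|exact: measurable_wide_event].
exists (\bigcap_n wide_event m n); split => //; last first.
  by move=> x /= /contrapT always n _; exact: always.
apply/eqP; rewrite eq_le measure_ge0 andbT.
apply/lee_addgt0Pr => e e_gt0; rewrite add0e.
have /mean_trace_prob_small[n small] : 0 < e / m.+1%:R by rewrite divr_gt0.
apply: (@le_trans _ _ (P (wide_event m n))).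
  by apply: le_measure; rewrite ?inE //; [exact: measurable_wide_event|exact: bigcap_inf].
apply: (le_trans (P_wide_event_le m n)); rewrite lee_fin mulrC -ler_pdivlMr //.
Qed.

Lemma ae_zero_one_label v : \forall x \ae P, (0 < size v)%N -> a v x = 0 \/ a v x = 1.
Proof.
have [v_gt0|] := boolP (0 < size v)%N; last by move=> /negP v0; apply: aeW.
have [P0 P1] := a_fair v_gt0.
have meas01 : measurable (a v @^-1` ([set 0] `|` [set 1])).
  by apply: measurable_funPTI; apply: measurableU.
exists (a v @^-1` (~` ([set 0] `|` [set 1]))); split.
- by rewrite -preimage_setC; apply: measurableC.
- rewrite -preimage_setC probability_setC // preimage_setU measureU //; last first.
    by apply/seteqP; split => x // [] /= -> /esym/eqP; rewrite oner_eq0.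
  have -> : (P (a v @^-1` [set 0%R]) + P (a v @^-1` [set 1%R]) =
      (1 / 2 + 1 / 2 : R)%:E)%E by rewrite EFinD; congr (_ + _)%E.
  by rewrite -splitr subee.
- by move=> x /= not01 x01; apply: not01.
Qed.

Lemma ae_zero_one_labels : \forall x \ae P, zero_one_labels (fun v => a v x).
Proof.
pose labels01_at n x := if unpickle n is Some v then
  (0 < size v)%N -> a v x = 0 \/ a v x = 1 else True.
have : \forall x \ae P, forall n, labels01_at n x.
  apply: ae_foralln => n; rewrite /labels01_at.
  by case: (unpickle n) => [v|]; [exact: ae_zero_one_label|exact: aeW].
by apply: filterS => x all01 v; have := all01 (pickle v); rewrite /labels01_at pickleK.
Qed.

Lemma in_wide_event m n x :
  zero_one_labels (fun v => a v x) ->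
  m.+1%:R^-1 <= n_traced R (labelling_of n (fun v => a v x == 1)) / (2 ^ n)%:R ->
  wide_event m n x.
Proof.
move=> label01 wide; apply: (mem_bigsetU (mem_index_enum _) wide) => v /= v_vertex.
rewrite label_labelling_of //; move: v_vertex; rewrite mem_vertices => /andP[v_gt0 _].
by case: (label01 v v_gt0) => ->; rewrite ?eqxx // eq_sym oner_eq0.
Qed.

End label_events.

Lemma binary_S_label_set (T : Type) (R : realType) (a : word -> T -> R) (lam : R) x :
  zero_one_labels (fun v => a v x) ->
  binary_S a lam x = label_set lam (fun v => a v x == 1).
Proof.
move=> label01; rewrite /binary_S /label_set /binary_f.
apply: eq_imagel => om _; congr (limn _); apply/funext => k.
apply: eq_bigr => j _; congr (_ * _).
have /label01[->|->] : (0 < size (Defs.prefix om j.+1))%N by rewrite size_prefix.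
  by rewrite eq_sym oner_eq0.
by rewrite eqxx.
Qed.

Theorem proposition1p8 (d : measure_display) (T : measurableType d)
  (R : realType) (P : probability T R) (a : word -> {RV P >-> R})
  (lambda : R) :
  mutually_independent_rv P a ->
  (forall v : word, (0 < size v)%N ->
     P (a v @^-1` [set 0]) = (1 / 2)%:E /\
     P (a v @^-1` [set 1]) = (1 / 2)%:E) ->
  0 < lambda -> lambda <= 1 / 2 ->
  {ae P, forall x, (@lebesgue_measure R) (binary_S (fun v => a v) lambda x) = 0%E}.
Proof.
move=> a_indep a_fair lam_gt0 lam_le_half.
have narrow := ae_foralln (ae_not_always_wide a_indep a_fair).
apply: filterS2 (ae_zero_one_labels a_fair) narrow => x label01 x_narrow.
rewrite (binary_S_label_set lambda label01).
apply: le_invS_eq0 => [|m]; first exact: measure_ge0.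
have /existsNP[n not_wide] := x_narrow m.
apply: le_trans (lebesgue_label_set_le lam_gt0 lam_le_half _ n) _.
rewrite lee_fin ltW // ltNge; apply/negP => /(in_wide_event label01).
exact: not_wide.
Qed.
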